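(* (McDiarmid's inequality under Poisson sampling.) Let $k\ge1$ and $n\ge 1$ be integers, $\vec p$ a probability distribution on $[k]$, and $\hat f:[k]^*\to\mathbb{R}$ an estimator whose sensitivity satisfies $1/n\le S(\hat f)<\infty$. Let $N\sim\mathrm{Poi}(n)$ and, conditionally on $N$, let $X^N$ be $N$ i.i.d. samples from $\vec p$. Then for every $\varepsilon\in(0,1)$, \[ \Pr\Big(\big|\hat f(X^N)-\mathbb{E}[\hat f(X^N)]\big|>\varepsilon\Big)\le 4\exp\Big(-\frac{\varepsilon^2}{2n\,(4S(\hat f))^2}\Big). \]
   Context: $[k]:=\{1,\dots,k\}$ and $[k]^*$ is the set of finite sequences over $[k]$ (including the empty sequence). The sensitivity of $\hat f$ is \[ S(\hat f):=\sup\{|\hat f(x)-\hat f(y)| : x,y\in[k]^*,\ y \text{ is obtained from } x \text{ by changing, inserting, or deleting a single symbol}\}. \] *)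

From Stdlib Require Import Reals List Arith Factorial.
Import ListNotations.
Open Scope R_scope.

Definition valid_word (k : nat) (w : list nat) : Prop :=
  Forall (fun a => (1 <= a <= k)%nat) w.

Definition neighbor (k : nat) (x y : list nat) : Prop :=
  (exists (a c : list nat) (i j : nat),
      x = a ++ i :: c /\ y = a ++ j :: c)
  \/ (exists (a c : list nat) (j : nat),
      x = a ++ c /\ y = a ++ j :: c)
  \/ (exists (a c : list nat) (j : nat),
      x = a ++ j :: c /\ y = a ++ c).

(* The set of values |f x - f y| over neighbouring words in [k]^*;
   the sensitivity S(f) is its supremum. *)
Definition sens_set (k : nat) (f : list nat -> R) (r : R) : Prop :=
  exists x y, valid_word k x /\ valid_word k y /\ neighbor k x y /\
              r = Rabs (f x - f y).

Definition prob_dist (k : nat) (p : nat -> R) : Prop :=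
  (forall i, (1 <= i <= k)%nat -> 0 <= p i) /\
  fold_right Rplus 0 (map p (seq 1 k)) = 1.

Fixpoint words (k m : nat) : list (list nat) :=
  match m with
  | O => [ [] ]
  | S m' => flat_map (fun a => map (cons a) (words k m')) (seq 1 k)
  end.

Definition word_prob (p : nat -> R) (w : list nat) : R :=
  fold_right (fun a r => p a * r) 1 w.

Definition poisson (n m : nat) : R :=
  exp (- INR n) * INR n ^ m / INR (fact m).

(* Contribution of samples of length m to E[g(X^N)], N ~ Poi(n),
   X^N | N i.i.d. from p:  P(N = m) * sum_{|w| = m} P(w) g(w). *)
Definition poisson_term (k n : nat) (p : nat -> R) (g : list nat -> R) (m : nat) : R :=
  poisson n m * fold_right Rplus 0 (map (fun w => word_prob p w * g w) (words k m)).

(* Write h m for the mean of f over i.i.d. words of length m.  For fixed m,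
   revealing the letters one at a time gives a martingale with increments of
   range at most S, so Azuma's inequality bounds E[exp (lam f) | N = m] by
   exp (lam h m + 4/3 m (lam S)^2).  Deleting a letter changes f by at most S,
   so h is S-Lipschitz, and the Poisson moment generating function controls
   h N - h n; Jensen's inequality relates the overall mean E to h n.  Hence the
   moment generating function of f(X^N) - E is at most 4 exp (16/3 n (lam S)^2),
   and the Chernoff bound with lam = 3 eps / (32 n S^2) gives the tail bound
   8 v^3 <= 4 v^2 for v = exp (- eps^2 / (64 n S^2)) <= 1/2, while for v > 1/2
   the claimed bound exceeds 1. *)

From Stdlib Require Import Reals List Lra Lia Psatz Factorial.
From Coquelicot Require Import Coquelicot.
Import ListNotations.
Open Scope R_scope.

Definition lsum {A : Type} (l : list A) (g : A -> R) : R := fold_right Rplus 0 (map g l).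

Lemma lsum_app {A} (l1 l2 : list A) g : lsum (l1 ++ l2) g = lsum l1 g + lsum l2 g.
Proof. induction l1 as [|x l1 IH]; unfold lsum in *; simpl; [lra|]. rewrite IH; lra. Qed.

Lemma lsum_flat_map {A B} (F : A -> list B) l g :
  lsum (flat_map F l) g = lsum l (fun a => lsum (F a) g).
Proof. induction l as [|a l IH]; simpl; [reflexivity|]. now rewrite lsum_app, IH. Qed.

Lemma lsum_map {A B} (h : A -> B) l g : lsum (map h l) g = lsum l (fun x => g (h x)).
Proof. unfold lsum; now rewrite map_map. Qed.

Lemma lsum_ext {A} (l : list A) g1 g2 :
  (forall x, In x l -> g1 x = g2 x) -> lsum l g1 = lsum l g2.
Proof.
  induction l as [|x l IH]; intros H; unfold lsum in *; simpl; [reflexivity|].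
  rewrite H by (now left). f_equal. apply IH. intros; apply H; now right.
Qed.

Lemma lsum_le {A} (l : list A) g1 g2 :
  (forall x, In x l -> g1 x <= g2 x) -> lsum l g1 <= lsum l g2.
Proof.
  induction l as [|x l IH]; intros H; unfold lsum in *; simpl; [lra|].
  apply Rplus_le_compat; [apply H; now left | apply IH; intros; apply H; now right].
Qed.

Lemma lsum_add {A} (l : list A) g1 g2 :
  lsum l (fun x => g1 x + g2 x) = lsum l g1 + lsum l g2.
Proof. induction l as [|x l IH]; unfold lsum in *; simpl; [lra|]. rewrite IH; lra. Qed.

Lemma lsum_scale {A} (l : list A) c g : lsum l (fun x => c * g x) = c * lsum l g.
Proof. induction l as [|x l IH]; unfold lsum in *; simpl; [lra|]. rewrite IH; lra. Qed.

Definition wmean {A : Type} (l : list A) (q g : A -> R) : R := lsum l (fun x => q x * g x).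

Definition is_distribution {A : Type} (l : list A) (q : A -> R) : Prop :=
  (forall x, In x l -> 0 <= q x) /\ lsum l q = 1.

Lemma exp_le_quadratic y : y <= 1/4 -> exp y <= 1 + y + 4/3 * y ^ 2.
Proof.
  (* exp y * exp (- y) = 1 with exp (- y) >= 1 - y, and
     (1 - y) (1 + y + 4/3 y^2) = 1 + y^2 (1 - 4 y) / 3 >= 1 *)
  intros Hy. pose proof (exp_ineq1_le (- y)). pose proof (exp_pos y).
  assert (exp y * exp (- y) = 1) by (rewrite <- exp_plus, Rplus_opp_r; apply exp_0).
  nra.
Qed.

Section WeightedMean.
Variables (A : Type) (l : list A) (q : A -> R).

Lemma wmean_ext g1 g2 : (forall x, In x l -> g1 x = g2 x) -> wmean l q g1 = wmean l q g2.
Proof. intros H; apply lsum_ext; intros x Hx; now rewrite H. Qed.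

Lemma wmean_add g1 g2 : wmean l q (fun x => g1 x + g2 x) = wmean l q g1 + wmean l q g2.
Proof. unfold wmean; rewrite <- lsum_add; apply lsum_ext; intros; ring. Qed.

Lemma wmean_scale c g : wmean l q (fun x => c * g x) = c * wmean l q g.
Proof. unfold wmean; rewrite <- lsum_scale; apply lsum_ext; intros; ring. Qed.

Lemma wmean_sub g1 g2 : wmean l q (fun x => g1 x - g2 x) = wmean l q g1 - wmean l q g2.
Proof.
  replace (wmean l q g1 - wmean l q g2) with (wmean l q g1 + -1 * wmean l q g2) by ring.
  rewrite <- wmean_scale, <- wmean_add. apply wmean_ext; intros; ring.
Qed.

Hypothesis Hq : is_distribution l q.

Lemma wmean_const c : wmean l q (fun _ => c) = c.
Proof.
  destruct Hq as [_ Hsum]. unfold wmean.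
  transitivity (c * lsum l q); [|rewrite Hsum; ring].
  rewrite <- lsum_scale. apply lsum_ext; intros; ring.
Qed.

Lemma wmean_le g1 g2 : (forall x, In x l -> g1 x <= g2 x) -> wmean l q g1 <= wmean l q g2.
Proof.
  destruct Hq as [Hpos _]. intros H. apply lsum_le. intros x Hx.
  apply Rmult_le_compat_l; auto.
Qed.

Lemma wmean_between g a b :
  (forall x, In x l -> a <= g x <= b) -> a <= wmean l q g <= b.
Proof.
  intros H. rewrite <- (wmean_const a), <- (wmean_const b).
  split; apply wmean_le; intros x Hx; apply H, Hx.
Qed.

Lemma wmean_abs_le g C : (forall x, In x l -> Rabs (g x) <= C) -> Rabs (wmean l q g) <= C.
Proof.
  intros H. apply Rabs_le, wmean_between. intros x Hx. now apply Rabs_le_between, H.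
Qed.

Lemma wmean_dev_le g c :
  (forall a b, In a l -> In b l -> Rabs (g a - g b) <= c) ->
  forall a, In a l -> Rabs (g a - wmean l q g) <= c.
Proof.
  intros H a Ha. rewrite <- (wmean_const (g a)) at 1. rewrite <- wmean_sub.
  apply wmean_abs_le. intros b Hb. now apply H.
Qed.

(* Hoeffding's lemma with the cruder constant 4/3 instead of 1/8, valid for [|lam| c <= 1/4]. *)
Lemma wmean_exp_le g lam c :
  Rabs lam * c <= 1/4 ->
  (forall a b, In a l -> In b l -> Rabs (g a - g b) <= c) ->
  wmean l q (fun x => exp (lam * g x)) <=
  exp (lam * wmean l q g + 4/3 * (Rabs lam * c) ^ 2).
Proof.
  intros Ht Hosc. set (mu := wmean l q g). set (t := Rabs lam * c) in *.
  apply Rle_trans with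
    (wmean l q (fun x => exp (lam * mu) * (1 + 4/3 * t ^ 2 + lam * (g x - mu)))).
  - apply wmean_le. intros x Hx.
    assert (Hdev : Rabs (lam * (g x - mu)) <= t).
    { unfold t. rewrite Rabs_mult. apply Rmult_le_compat_l; [apply Rabs_pos|].
      now apply wmean_dev_le. }
    apply Rabs_le_between in Hdev.
    pose proof (exp_le_quadratic (lam * (g x - mu)) ltac:(lra)).
    pose proof (exp_pos (lam * mu)).
    replace (lam * g x) with (lam * mu + lam * (g x - mu)) by ring.
    rewrite exp_plus. apply Rmult_le_compat_l; nra.
  - rewrite wmean_scale, wmean_add, wmean_const, wmean_scale, wmean_sub, wmean_const.
    fold mu. rewrite Rminus_diag, Rmult_0_r, Rplus_0_r, exp_plus.
    apply Rmult_le_compat_l; [left; apply exp_pos | apply exp_ineq1_le].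
Qed.

End WeightedMean.

Notation word_mean k p m := (wmean (words k m) (word_prob p)).

Section Words.
Variables (k : nat) (p : nat -> R).

Lemma in_letters a : In a (seq 1 k) <-> (1 <= a <= k)%nat.
Proof. rewrite in_seq. lia. Qed.

Lemma words_valid m w : In w (words k m) -> valid_word k w /\ length w = m.
Proof.
  revert w; induction m as [|m IH]; intros w H; simpl in H.
  - destruct H as [<- | []]. split; [constructor | reflexivity].
  - apply in_flat_map in H as [a [Ha Hw]]. apply in_map_iff in Hw as [w' [<- Hw']].
    destruct (IH w' Hw'). split; [constructor; auto; now apply in_letters | simpl; auto].
Qed.

Lemma word_mean_S m g :
  word_mean k p (S m) g = wmean (seq 1 k) p (fun a => word_mean k p m (fun w => g (a :: w))).
Proof.
  unfold wmean. simpl. rewrite lsum_flat_map. apply lsum_ext. intros a _.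
  rewrite lsum_map, <- lsum_scale. apply lsum_ext. intros w _. simpl. ring.
Qed.

Hypothesis Hp : is_distribution (seq 1 k) p.

Lemma words_distribution m : is_distribution (words k m) (word_prob p).
Proof.
  split.
  - intros w Hw. destruct (words_valid m w Hw) as [Hval _]. clear Hw.
    induction Hval as [|a w Ha _ IH]; simpl; [lra|].
    apply Rmult_le_pos; auto. apply (proj1 Hp), in_letters, Ha.
  - induction m as [|m IH]; [unfold lsum; simpl; ring|].
    transitivity (word_mean k p (S m) (fun _ => 1)); [apply lsum_ext; intros; ring|].
    rewrite word_mean_S. transitivity (wmean (seq 1 k) p (fun _ => 1)); [|now apply wmean_const].
    apply wmean_ext. intros a _. etransitivity; [|exact IH]. apply lsum_ext; intros; ring.
Qed.

End Words.

Definition bounded_changes (k : nat) (g : list nat -> R) (c : R) : Prop :=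
  forall pre a b w, valid_word k pre -> (1 <= a <= k)%nat -> (1 <= b <= k)%nat ->
    valid_word k w -> Rabs (g (pre ++ a :: w) - g (pre ++ b :: w)) <= c.

Section Sensitivity.
Variables (k : nat) (p : nat -> R) (c : R).
Hypothesis Hp : is_distribution (seq 1 k) p.

(* Azuma's inequality along the Doob martingale that reveals the letters one by one. *)
Lemma word_mean_exp_le lam : Rabs lam * c <= 1/4 ->
  forall m g, bounded_changes k g c ->
  word_mean k p m (fun w => exp (lam * g w)) <=
  exp (lam * word_mean k p m g + 4/3 * INR m * (Rabs lam * c) ^ 2).
Proof.
  intros Ht m. induction m as [|m IH]; intros g Hg.
  - unfold wmean, lsum; simpl. rewrite Rmult_1_l, Rplus_0_r. right. f_equal. ring.
  - rewrite (word_mean_S k p m g), (word_mean_S k p m (fun w => exp (lam * g w))).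
    set (psi := fun a => word_mean k p m (fun w => g (a :: w))).
    assert (Hstep : forall a, In a (seq 1 k) ->
      word_mean k p m (fun w => exp (lam * g (a :: w))) <=
      exp (4/3 * INR m * (Rabs lam * c) ^ 2) * exp (lam * psi a)).
    { intros a Ha. rewrite <- exp_plus, Rplus_comm. apply IH.
      intros pre b b' w Hpre. apply (Hg (a :: pre)).
      constructor; auto. now apply in_letters. }
    apply Rle_trans with
      (wmean (seq 1 k) p (fun a => exp (4/3 * INR m * (Rabs lam * c) ^ 2) * exp (lam * psi a)));
      [now apply wmean_le|].
    rewrite wmean_scale, S_INR.
    replace (lam * wmean (seq 1 k) p psi + 4/3 * (INR m + 1) * (Rabs lam * c) ^ 2)
      with (4/3 * INR m * (Rabs lam * c) ^ 2 +
            (lam * wmean (seq 1 k) p psi + 4/3 * (Rabs lam * c) ^ 2)) by ring.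
    rewrite (exp_plus (4/3 * INR m * _)).
    apply Rmult_le_compat_l; [left; apply exp_pos|].
    apply wmean_exp_le; auto. intros a b Ha Hb. unfold psi.
    rewrite <- wmean_sub. apply (wmean_abs_le _ _ _ (words_distribution k p Hp m)).
    intros w Hw. destruct (words_valid k m w Hw) as [Hw' _].
    apply (Hg []); auto; [constructor | |]; now apply in_letters.
Qed.

Variable f : list nat -> R.
Hypothesis Hf : forall x y, valid_word k x -> valid_word k y -> neighbor k x y ->
  Rabs (f x - f y) <= c.

Lemma sensitivity_bounded_changes : bounded_changes k f c.
Proof.
  intros pre a b w Hpre Ha Hb Hw.
  apply Hf; try (apply Forall_app; split; auto; constructor; auto).
  left. now exists pre, w, a, b.
Qed.

(* Dropping the first letter is a deletion, so the mean of [f] over words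
   of length [m] is [c]-Lipschitz in [m]. *)
Lemma word_mean_step m : Rabs (word_mean k p (S m) f - word_mean k p m f) <= c.
Proof.
  rewrite word_mean_S.
  replace (word_mean k p m f) with (wmean (seq 1 k) p (fun _ => word_mean k p m f))
    by (now apply wmean_const).
  rewrite <- wmean_sub. apply wmean_abs_le; auto. intros a Ha.
  rewrite <- wmean_sub. apply (wmean_abs_le _ _ _ (words_distribution k p Hp m)).
  intros w Hw. destruct (words_valid k m w Hw) as [Hw' _].
  apply Hf; auto.
  - constructor; auto. now apply in_letters.
  - right; right. now exists [], w, a.
Qed.

Lemma word_mean_lipschitz m j :
  Rabs (word_mean k p m f - word_mean k p j f) <= c * Rabs (INR m - INR j).
Proof.
  assert (Hshift : forall i d,
    Rabs (word_mean k p (i + d) f - word_mean k p i f) <= c * INR d).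
  { intros i d. induction d as [|d IH].
    - rewrite Nat.add_0_r, Rminus_diag, Rabs_R0. simpl; lra.
    - rewrite Nat.add_succ_r, S_INR. pose proof (word_mean_step (i + d)) as H.
      apply Rabs_le_between in H. apply Rabs_le_between in IH. apply Rabs_le. lra. }
  destruct (Nat.le_ge_cases j m) as [H|H].
  - replace m with (j + (m - j))%nat by lia. rewrite plus_INR.
    replace (INR j + INR (m - j) - INR j) with (INR (m - j)) by ring.
    rewrite (Rabs_right (INR (m - j))) by (apply Rle_ge, pos_INR). apply Hshift.
  - replace j with (m + (j - m))%nat by lia. rewrite plus_INR.
    replace (INR m - (INR m + INR (j - m))) with (- INR (j - m)) by ring.
    rewrite Rabs_Ropp, (Rabs_right (INR (j - m))) by (apply Rle_ge, pos_INR).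
    rewrite Rabs_minus_sym. apply Hshift.
Qed.

Lemma word_mean_drift_le lam m j :
  lam * (word_mean k p m f - word_mean k p j f) <= Rabs lam * c * Rabs (INR m - INR j).
Proof.
  rewrite Rmult_assoc. apply Rle_trans with (1 := Rle_abs _). rewrite Rabs_mult.
  apply Rmult_le_compat_l; [apply Rabs_pos | apply word_mean_lipschitz].
Qed.

End Sensitivity.

Lemma exp_le_compat x y : x <= y -> exp x <= exp y.
Proof. intros [H | ->]; [left; now apply exp_increasing | apply Rle_refl]. Qed.

Lemma exp_abs_le s d : exp (s * Rabs d) <= exp (s * d) + exp (- s * d).
Proof.
  pose proof (exp_pos (s * d)). pose proof (exp_pos (- s * d)).
  unfold Rabs; destruct (Rcase_abs d); [replace (s * - d) with (- s * d) by ring|]; lra.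
Qed.

Lemma indicator_le_exp eps d lam : 0 <= lam ->
  (if Rlt_dec eps (Rabs d) then 1 else 0) <= exp (- lam * eps) * (exp (lam * d) + exp (- lam * d)).
Proof.
  intros Hlam. rewrite Rmult_plus_distr_l, <- !exp_plus.
  pose proof (exp_pos (- lam * eps + lam * d)). pose proof (exp_pos (- lam * eps + - lam * d)).
  destruct (Rlt_dec eps (Rabs d)) as [Hd | _]; [|lra].
  rewrite <- exp_0. unfold Rabs in Hd. destruct (Rcase_abs d).
  - enough (exp 0 <= exp (- lam * eps + - lam * d)) by lra. apply exp_le_compat. nra.
  - enough (exp 0 <= exp (- lam * eps + lam * d)) by lra. apply exp_le_compat. nra.
Qed.

Lemma series_scale (a : nat -> R) l c : is_series a l -> is_series (fun m => c * a m) (c * l).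
Proof. exact (is_series_scal c a l). Qed.

Lemma series_add (a b : nat -> R) la lb :
  is_series a la -> is_series b lb -> is_series (fun m => a m + b m) (la + lb).
Proof. exact (is_series_plus a b la lb). Qed.

Lemma series_ext (a b : nat -> R) l :
  (forall m, a m = b m) -> is_series a l -> is_series b l.
Proof. exact (is_series_ext a b l). Qed.

Lemma series_le (a b : nat -> R) la lb :
  is_series a la -> is_series b lb -> (forall m, a m <= b m) -> la <= lb.
Proof.
  intros Ha Hb H. apply is_series_Reals in Ha. apply is_series_Reals in Hb.
  eapply Rle_cv_lim; [|exact Ha | exact Hb]. intros N. now apply sum_growing.
Qed.

Lemma series_exists_abs_le (a b : nat -> R) lb :
  (forall m, Rabs (a m) <= b m) -> is_series b lb -> exists la, is_series a la.
Proof.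
  intros H Hb. exists (Series a). apply Series_correct.
  apply (ex_series_le a b H). now exists lb.
Qed.

Lemma series_dominated (a b : nat -> R) lb :
  (forall m, 0 <= a m <= b m) -> is_series b lb -> exists la, is_series a la /\ la <= lb.
Proof.
  intros H Hb. destruct (series_exists_abs_le a b lb) as [la Ha]; auto.
  - intros m. specialize (H m). rewrite Rabs_right; lra.
  - exists la. split; auto. apply (series_le a b la lb Ha Hb). intros m; apply H.
Qed.

(* Jensen's inequality for [exp], from the tangent line [exp x >= exp mu (1 + x - mu)]. *)
Lemma exp_series_mean_le (q x : nat -> R) mu L :
  (forall m, 0 <= q m) -> is_series q 1 -> is_series (fun m => q m * x m) mu ->
  is_series (fun m => q m * exp (x m)) L -> exp mu <= L.
Proof.
  intros Hq H1 Hx HL.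
  replace (exp mu) with (exp mu * (1 + mu + - mu * 1)) by ring.
  apply (series_le _ _ _ _
    (series_scale _ _ (exp mu) (series_add _ _ _ _ (series_add _ _ _ _ H1 Hx)
                                     (series_scale _ _ (- mu) H1))) HL).
  intros m. pose proof (exp_ineq1_le (x m - mu)).
  assert (0 <= exp mu * q m) by (apply Rmult_le_pos; [left; apply exp_pos | apply Hq]).
  replace (exp (x m)) with (exp mu * exp (x m - mu)) by (rewrite <- exp_plus; f_equal; ring).
  nra.
Qed.

Lemma poisson_nonneg n m : 0 <= poisson n m.
Proof.
  unfold poisson. apply Rmult_le_pos.
  - apply Rmult_le_pos; [left; apply exp_pos | apply pow_le, pos_INR].
  - left; apply Rinv_0_lt_compat, lt_0_INR, lt_O_fact.
Qed.

Lemma poisson_mgf n s :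
  is_series (fun m => poisson n m * exp (s * INR m)) (exp (INR n * (exp s - 1))).
Proof.
  pose proof (proj2_sig (exist_exp (INR n * exp s))) as H. simpl in H.
  apply is_series_Reals, (series_scale _ _ (exp (- INR n))) in H.
  replace (exp (INR n * (exp s - 1))) with (exp (- INR n) * exp (INR n * exp s))
    by (rewrite <- exp_plus; f_equal; ring).
  revert H. apply series_ext. intros m. unfold poisson.
  replace (exp (s * INR m)) with (exp s ^ m).
  - unfold Rdiv. rewrite Rpow_mult_distr. ring.
  - induction m as [|m IH]; [change (INR 0) with 0; now rewrite Rmult_0_r, exp_0|].
    rewrite S_INR, Rmult_plus_distr_l, Rmult_1_r, exp_plus, <- IH. simpl. ring.
Qed.

Lemma poisson_total n : is_series (poisson n) 1.
Proof.
  pose proof (poisson_mgf n 0) as H.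
  rewrite exp_0, Rminus_diag, Rmult_0_r, exp_0 in H.
  revert H. apply series_ext. intros m. rewrite Rmult_0_l, exp_0. ring.
Qed.

Lemma poisson_centered_mgf_le n s : s <= 1/4 ->
  exists L, is_series (fun m => poisson n m * exp (s * (INR m - INR n))) L /\
            L <= exp (4/3 * INR n * s ^ 2).
Proof.
  intros Hs. exists (exp (- s * INR n) * exp (INR n * (exp s - 1))). split.
  - apply (series_ext (fun m => exp (- s * INR n) * (poisson n m * exp (s * INR m)))).
    + intros m. replace (s * (INR m - INR n)) with (- s * INR n + s * INR m) by ring.
      rewrite exp_plus. ring.
    + apply series_scale, poisson_mgf.
  - rewrite <- exp_plus. apply exp_le_compat.
    pose proof (exp_le_quadratic s Hs). pose proof (pos_INR n). nra.
Qed.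

Lemma poisson_abs_mgf_le n s : 0 <= s <= 1/4 ->
  exists L, is_series (fun m => poisson n m * exp (s * Rabs (INR m - INR n))) L /\
            L <= 2 * exp (4/3 * INR n * s ^ 2).
Proof.
  intros Hs.
  destruct (poisson_centered_mgf_le n s) as [L1 [H1 HL1]]; [lra|].
  destruct (poisson_centered_mgf_le n (- s)) as [L2 [H2 HL2]]; [lra|].
  assert (Hdom : forall m, 0 <= poisson n m * exp (s * Rabs (INR m - INR n)) <=
    poisson n m * exp (s * (INR m - INR n)) + poisson n m * exp (- s * (INR m - INR n))).
  { intros m. pose proof (poisson_nonneg n m). pose proof (exp_pos (s * Rabs (INR m - INR n))).
    pose proof (exp_abs_le s (INR m - INR n)). split; nra. }
  destruct (series_dominated _ _ _ Hdom (series_add _ _ _ _ H1 H2)) as [L [HL HLb]].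
  exists L. split; auto. replace ((- s) ^ 2) with (s ^ 2) in HL2 by ring. lra.
Qed.

Section PoissonMixture.
Variables (k n : nat) (p : nat -> R) (f : list nat -> R) (c : R).
Hypothesis Hp : is_distribution (seq 1 k) p.
Hypothesis Hf : forall x y, valid_word k x -> valid_word k y -> neighbor k x y ->
  Rabs (f x - f y) <= c.
Hypothesis Hc : 0 <= c.

Lemma word_mean_exp_nonneg m g : 0 <= word_mean k p m (fun w => exp (g w)).
Proof.
  rewrite <- (wmean_const _ _ _ (words_distribution k p Hp m) 0).
  apply wmean_le; [apply words_distribution, Hp |]. intros; left; apply exp_pos.
Qed.

Lemma mixture_mean_exists : exists E, is_series (fun m => poisson n m * word_mean k p m f) E.
Proof.
  set (C := Rabs (word_mean k p 0 f) + c).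
  apply (series_exists_abs_le _ (fun m => C * (poisson n m * exp (1 * INR m)))
           (C * exp (INR n * (exp 1 - 1)))); [|apply series_scale, poisson_mgf].
  intros m. rewrite Rabs_mult, (Rabs_right (poisson n m)) by (apply Rle_ge, poisson_nonneg).
  pose proof (word_mean_lipschitz k p c Hp f Hf m 0) as Hlip.
  rewrite Rminus_0_r, (Rabs_right (INR m)) in Hlip by (apply Rle_ge, pos_INR).
  pose proof (Rabs_triang_inv (word_mean k p m f) (word_mean k p 0 f)).
  pose proof (exp_ineq1_le (INR m)). pose proof (pos_INR m). pose proof (poisson_nonneg n m).
  pose proof (Rabs_pos (word_mean k p 0 f)).
  assert (Rabs (word_mean k p m f) <= C * exp (INR m)) by (unfold C; nra).
  rewrite Rmult_1_l, (Rmult_comm C), Rmult_assoc. apply Rmult_le_compat_l; auto.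
  now rewrite Rmult_comm.
Qed.

Variable E : R.
Hypothesis HE : is_series (fun m => poisson n m * word_mean k p m f) E.

Lemma exp_mean_gap_le lam : Rabs lam * c <= 1/4 ->
  exp (lam * (word_mean k p n f - E)) <= 2 * exp (4/3 * INR n * (Rabs lam * c) ^ 2).
Proof.
  intros Ht. assert (Ht0 : 0 <= Rabs lam * c) by (apply Rmult_le_pos; auto using Rabs_pos).
  destruct (poisson_abs_mgf_le n (Rabs lam * c)) as [L [HL HLb]]; [lra|].
  assert (Hdom : forall m, 0 <= poisson n m * exp (lam * (word_mean k p n f - word_mean k p m f))
                         <= poisson n m * exp (Rabs lam * c * Rabs (INR m - INR n))).
  { intros m. pose proof (poisson_nonneg n m) as Hpi. pose proof (exp_pos (lam * (word_mean k p n f - word_mean k p m f))).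
    split; [nra|]. apply Rmult_le_compat_l, exp_le_compat; auto.
    rewrite (Rabs_minus_sym (INR m)). now apply word_mean_drift_le. }
  destruct (series_dominated _ _ _ Hdom HL) as [L' [HL' HL'b]].
  enough (exp (lam * (word_mean k p n f - E)) <= L') by lra.
  apply (exp_series_mean_le (poisson n)
           (fun m => lam * (word_mean k p n f - word_mean k p m f)) _ _
           (poisson_nonneg n) (poisson_total n)); auto.
  replace (lam * (word_mean k p n f - E)) with (lam * word_mean k p n f * 1 + - lam * E) by ring.
  apply (series_ext (fun m => lam * word_mean k p n f * poisson n m +
                             - lam * (poisson n m * word_mean k p m f))); [intros; ring|].
  apply series_add; apply series_scale; auto using poisson_total.
Qed.

(* Relative to length [n], both the drift of the conditional mean and the excess
   [4/3 (m - n) t^2] of the Azuma exponent are linear in [|m - n|]. *)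
Lemma mixture_mgf_term_le lam m : Rabs lam * c <= 1/4 ->
  poisson n m * word_mean k p m (fun w => exp (lam * (f w - E))) <=
  exp (lam * (word_mean k p n f - E) + 4/3 * INR n * (Rabs lam * c) ^ 2) *
  (poisson n m * exp ((Rabs lam * c + 4/3 * (Rabs lam * c) ^ 2) * Rabs (INR m - INR n))).
Proof.
  intros Ht. pose proof (poisson_nonneg n m).
  rewrite (wmean_ext _ _ _ _ (fun w => exp (- lam * E) * exp (lam * f w)))
    by (intros; rewrite <- exp_plus; f_equal; ring).
  rewrite wmean_scale.
  pose proof (word_mean_exp_le k p c Hp lam Ht m f (sensitivity_bounded_changes k c f Hf)).
  apply Rle_trans with (poisson n m * exp (- lam * E +
                          (lam * word_mean k p m f + 4/3 * INR m * (Rabs lam * c) ^ 2))).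
  { rewrite exp_plus. apply Rmult_le_compat_l; auto.
    apply Rmult_le_compat_l; [left; apply exp_pos | assumption]. }
  match goal with |- _ <= exp ?A * (poisson n m * exp ?B) =>
    replace (exp A * (poisson n m * exp B)) with (poisson n m * exp (A + B))
      by (rewrite exp_plus; ring) end.
  apply Rmult_le_compat_l, exp_le_compat; auto.
  pose proof (word_mean_drift_le k p c Hp f Hf lam m n).
  pose proof (Rle_abs (INR m - INR n)). pose proof (pow2_ge_0 (Rabs lam * c)). nra.
Qed.

Lemma mixture_mgf_le lam : Rabs lam * c <= 3/32 ->
  exists M, is_series (fun m => poisson n m * word_mean k p m (fun w => exp (lam * (f w - E)))) M
         /\ M <= 4 * exp (16/3 * INR n * (Rabs lam * c) ^ 2).
Proof.
  intros Ht. assert (Ht0 : 0 <= Rabs lam * c) by (apply Rmult_le_pos; auto using Rabs_pos).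
  set (t := Rabs lam * c) in *. set (u := t + 4/3 * t ^ 2).
  set (C := exp (lam * (word_mean k p n f - E) + 4/3 * INR n * t ^ 2)).
  destruct (poisson_abs_mgf_le n u) as [L [HL HLb]]; [unfold u; nra|].
  assert (Hdom : forall m,
    0 <= poisson n m * word_mean k p m (fun w => exp (lam * (f w - E))) <=
    C * (poisson n m * exp (u * Rabs (INR m - INR n)))).
  { intros m. split.
    - apply Rmult_le_pos; [apply poisson_nonneg | apply word_mean_exp_nonneg].
    - apply mixture_mgf_term_le. unfold t in *; lra. }
  destruct (series_dominated _ _ _ Hdom (series_scale _ _ C HL)) as [M [HM HMb]].
  exists M. split; auto.
  pose proof (exp_mean_gap_le lam ltac:(unfold t in *; lra)) as Hgap. fold t in Hgap.
  set (ea := exp (4/3 * INR n * t ^ 2)) in *. set (eb := exp (4/3 * INR n * u ^ 2)) in *.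
  assert (HC : 0 <= C <= 2 * ea * ea).
  { unfold C. rewrite exp_plus. fold ea. pose proof (exp_pos (lam * (word_mean k p n f - E))).
    assert (0 < ea) by apply exp_pos. split; nra. }
  assert (0 < eb) by apply exp_pos.
  assert (HM4 : M <= 4 * (ea * ea * eb)).
  { assert (C * L <= C * (2 * eb)) by (apply Rmult_le_compat_l; lra).
    assert (C * (2 * eb) <= 2 * ea * ea * (2 * eb)) by (apply Rmult_le_compat_r; lra).
    lra. }
  apply Rle_trans with (1 := HM4). unfold ea, eb. rewrite <- !exp_plus.
  apply Rmult_le_compat_l; [lra|]. apply exp_le_compat.
  assert (Hu : u ^ 2 <= 2 * t ^ 2) by (unfold u; nra).
  pose proof (pos_INR n). nra.
Qed.

Lemma mixture_tail_le eps lam Pr : 0 <= lam -> lam * c <= 3/32 ->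
  is_series (fun m => poisson n m *
    word_mean k p m (fun w => if Rlt_dec eps (Rabs (f w - E)) then 1 else 0)) Pr ->
  Pr <= 8 * exp (- lam * eps + 16/3 * INR n * (lam * c) ^ 2).
Proof.
  intros Hlam Ht HPr.
  assert (Habs : Rabs lam = lam) by (apply Rabs_right; lra).
  destruct (mixture_mgf_le lam) as [M1 [HM1 HM1b]]; [now rewrite Habs|].
  destruct (mixture_mgf_le (- lam)) as [M2 [HM2 HM2b]]; [now rewrite Rabs_Ropp, Habs|].
  rewrite Rabs_Ropp, Habs in HM2b. rewrite Habs in HM1b.
  apply Rle_trans with (exp (- lam * eps) * (M1 + M2)).
  - apply (series_le _ _ _ _ HPr (series_scale _ _ _ (series_add _ _ _ _ HM1 HM2))).
    intros m. pose proof (poisson_nonneg n m).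
    match goal with |- _ <= ?rhs =>
      replace rhs with (poisson n m * word_mean k p m (fun w =>
        exp (- lam * eps) * (exp (lam * (f w - E)) + exp (- lam * (f w - E)))))
        by (rewrite wmean_scale, wmean_add; ring) end.
    apply Rmult_le_compat_l; auto. apply wmean_le; [now apply words_distribution|].
    intros w _. now apply indicator_le_exp.
  - rewrite exp_plus. pose proof (exp_pos (- lam * eps)). nra.
Qed.

End PoissonMixture.

Lemma tail_bound_of_mgf n S eps Pr : (1 <= n)%nat -> 1 / INR n <= S -> 0 < eps < 1 -> Pr <= 1 ->
  (forall lam, 0 <= lam -> lam * S <= 3/32 ->
     Pr <= 8 * exp (- lam * eps + 16/3 * INR n * (lam * S) ^ 2)) ->
  Pr <= 4 * exp (- (eps ^ 2 / (2 * INR n * (4 * S) ^ 2))).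
Proof.
  intros Hn HnS Heps HPr1 Hmgf.
  assert (Hn0 : 0 < INR n) by (apply lt_0_INR; lia).
  assert (HS : 1 <= INR n * S).
  { apply (Rmult_le_compat_l (INR n)) in HnS; [|lra].
    unfold Rdiv in HnS. rewrite Rmult_1_l, Rinv_r in HnS; lra. }
  assert (HS0 : 0 < S) by nra.
  set (lam := 3 * eps / (32 * INR n * S ^ 2)).
  assert (HlamS : lam * S = 3 / 32 * (eps / (INR n * S))) by (unfold lam; field; lra).
  assert (Hratio : eps / (INR n * S) <= 1).
  { apply Rmult_le_reg_r with (INR n * S); [lra|].
    unfold Rdiv. rewrite Rmult_assoc, Rinv_l; lra. }
  assert (Hlam : 0 <= lam) by (unfold lam; apply Rmult_le_pos; [lra|]; left;
    apply Rinv_0_lt_compat; nra).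
  set (v := exp (- (eps ^ 2 / (64 * INR n * S ^ 2)))).
  assert (Hv : 0 < v) by apply exp_pos.
  assert (HPr : Pr <= 8 * (v * v * v)).
  { replace (v * v * v) with (exp (- lam * eps + 16/3 * INR n * (lam * S) ^ 2)).
    - apply Hmgf; [lra | rewrite HlamS; assert (0 <= eps / (INR n * S)) by
        (apply Rmult_le_pos; [lra | left; apply Rinv_0_lt_compat; lra]); lra].
    - unfold v. rewrite <- !exp_plus. f_equal. rewrite HlamS. unfold lam. field. lra. }
  replace (exp (- (eps ^ 2 / (2 * INR n * (4 * S) ^ 2)))) with (v * v)
    by (unfold v; rewrite <- exp_plus; f_equal; field; lra).
  destruct (Rle_dec v (1/2)); nra.
Qed.

Theorem mainTheorem7 (k n : nat) (p : nat -> R) (f : list nat -> R) (S eps : R) :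
  (1 <= k)%nat -> (1 <= n)%nat ->
  prob_dist k p ->
  is_lub (sens_set k f) S ->
  1 / INR n <= S ->
  0 < eps < 1 ->
  exists E Pr : R,
    infinite_sum (poisson_term k n p f) E /\
    infinite_sum
      (poisson_term k n p
         (fun w => if Rlt_dec eps (Rabs (f w - E)) then 1 else 0)) Pr /\
    Pr <= 4 * exp (- (eps ^ 2 / (2 * INR n * (4 * S) ^ 2))).
Proof.
  intros _ Hn [Hpos Hsum] [Hub _] HnS Heps.
  assert (Hp : is_distribution (seq 1 k) p)
    by (split; [intros i Hi; apply Hpos, in_letters, Hi | exact Hsum]).
  assert (Hf : forall x y, valid_word k x -> valid_word k y -> neighbor k x y ->
                 Rabs (f x - f y) <= S) by (intros x y Hx Hy Hxy; apply Hub; now exists x, y).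
  assert (HS : 0 <= S).
  { apply Rle_trans with (1 / INR n); auto. left. apply Rdiv_lt_0_compat; [lra|].
    apply lt_0_INR; lia. }
  destruct (mixture_mean_exists k n p f S Hp Hf HS) as [E HE].
  set (ind := fun w => if Rlt_dec eps (Rabs (f w - E)) then 1 else 0).
  assert (Hind : forall m, 0 <= poisson n m * word_mean k p m ind <= poisson n m).
  { intros m. pose proof (poisson_nonneg n m).
    assert (0 <= word_mean k p m ind <= 1).
    { apply wmean_between; [now apply words_distribution|].
      intros w _. unfold ind. destruct Rlt_dec; lra. }
    split; nra. }
  destruct (series_dominated _ _ _ Hind (poisson_total n)) as [Pr [HPr HPr1]].
  exists E, Pr. split; [now apply is_series_Reals|]. split; [now apply is_series_Reals|].
  apply tail_bound_of_mgf; auto. intros lam Hlam Ht.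
  now apply (mixture_tail_le k n p f S Hp Hf HS E HE).
Qed.
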